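(* Let $M$ be a graded $R$-module. The natural map $\varphi=\phi^R\circ\psi^q$ is continuous with respect to the quasi-Zariski topology on $qp.Spec_g(M)$ and the Zariski topology on $Spec_g(\overline R)$; more precisely, for every graded ideal $I$ of $R$ containing $\mathrm{Ann}(M)$, $$\varphi^{-1}(V_{\overline R}^g(\overline I))=(\phi^R\circ\psi^q)^{-1}(V_{\overline R}^g(\overline I))=(\psi^q)^{-1}(qp\text{-}V_{\overline R}^g(\overline I))=qp\text{-}V_M^g(IM).$$
   Context: $R=\bigoplus_{g\in G}R_g$ is a graded commutative ring with identity graded by a group $G$, $h(R)=\bigcup_g R_g$; $M$ is a graded $R$-module, $h(M)$ its homogeneous elements. $Gr(I)$ is the graded radical of a graded ideal $I$. $Spec_g(R)$: graded prime ideals. $(K:_RM)=\{r: rM\subseteq K\}$. Graded prime submodule: proper graded $P$ with $rm\in P$ ($r\in h(R), m\in h(M)$) implying $m\in P$ or $r\in(P:_RM)$. $Gr_M(K)$: intersection of graded prime submodules containing $K$ ($M$ if none). Graded primeful property of $K$: for each graded prime $p\supseteq(K:_RM)$ there is a graded prime submodule $P\supseteq K$ with $(P:_RM)=p$. Graded quasi-primary submodule: proper graded $Q$ with $rm\in Q$ ($r\in h(R),m\in h(M)$) implying $r\in Gr((Q:_RM))$ or $m\in Gr_M(Q)$. $qp.Spec_g(M)$: graded quasi-primary submodules with the graded primeful property. $qp\text{-}V_M^g(K)=\{Q\in qp.Spec_g(M): Gr((Q:_RM))\supseteq Gr((K:_RM))\}$; the quasi-Zariski topology on $qp.Spec_g(M)$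 has closed sets exactly the $qp\text{-}V_M^g(K)$. $\overline R=R/\mathrm{Ann}(M)$, $\overline I=I/\mathrm{Ann}(M)$. $Spec_g(\overline R)$ has the Zariski topology with closed sets $V_{\overline R}^g(\overline I)=\{\overline p\in Spec_g(\overline R):\overline I\subseteq\overline p\}$. A graded quasi-primary ideal of a graded ring is a proper graded ideal $q$ such that $ab\in q$ with $a,b$ homogeneous implies $a\in Gr(q)$ or $b\in Gr(q)$; $qp.Spec_g(\overline R)$ is the set of these in $\overline R$. $\psi^q:qp.Spec_g(M)\to qp.Spec_g(\overline R)$, $\psi^q(Q)=\overline{(Q:_RM)}$; $\phi^R:qp.Spec_g(\overline R)\to Spec_g(\overline R)$, $\phi^R(\overline q)=\overline{Gr(q)}$; $qp\text{-}V_{\overline R}^g(\overline I)=(\phi^R)^{-1}(V_{\overline R}^g(\overline I))$, i.e. the set of $\overline q\in qp.Spec_g(\overline R)$ with $Gr(q)\supseteq I$. The natural map is $\varphi(Q)=\overline{(Gr_M(Q):_RM)}=\overline{Gr((Q:_RM))}$. *)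

From HB Require Import structures.
From mathcomp Require Import all_boot all_order all_algebra.
Set Implicit Arguments. Unset Strict Implicit. Unset Printing Implicit Defensive.
Import GRing.Theory.
Local Open Scope ring_scope.

Record group_law (G : eqType) := GroupLaw {
  gmul : G -> G -> G;
  gone : G;
  ginv : G -> G;
  gmulA : forall x y z, gmul x (gmul y z) = gmul (gmul x y) z;
  gmul1g : forall x, gmul gone x = x;
  gmulVg : forall x, gmul (ginv x) x = gone }.

(* ---------- G-graded commutative rings R = (+)_g R_g ----------
   rcomp g x is the g-component x_g of x; R_g = {x | rcomp g x = x}. *)
Record graded_ring (G : eqType) (GL : group_law G) (R : comPzRingType) := GradedRing {
  rcomp : G -> R -> R;
  rcompD : forall g x y, rcomp g (x + y) = rcomp g x + rcomp g y;
  rcomp_id : forall g h x, rcomp g (rcomp h x) = if g == h then rcomp h x else 0;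
  rcomp_dec : forall x, exists s : seq G,
     [/\ uniq s, (forall g, g \notin s -> rcomp g x = 0) & x = \sum_(g <- s) rcomp g x];
  rcompM : forall g h x y,
     rcomp (gmul GL g h) (rcomp g x * rcomp h y) = rcomp g x * rcomp h y }.

Record graded_module (G : eqType) (GL : group_law G) (R : comPzRingType)
    (GR : graded_ring GL R) (M : lmodType R) := GradedModule {
  mcomp : G -> M -> M;
  mcompD : forall g x y, mcomp g (x + y) = mcomp g x + mcomp g y;
  mcomp_id : forall g h x, mcomp g (mcomp h x) = if g == h then mcomp h x else 0;
  mcomp_dec : forall x, exists s : seq G,
     [/\ uniq s, (forall g, g \notin s -> mcomp g x = 0) & x = \sum_(g <- s) mcomp g x];
  mcompZ : forall g h r x,
     mcomp (gmul GL g h) (rcomp GR g r *: mcomp h x) = rcomp GR g r *: mcomp h x }.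

Definition psubset {T} (A B : T -> Prop) := forall x, A x -> B x.
Definition img {A B} (f : A -> B) (I : A -> Prop) : B -> Prop :=
  fun y => exists x, I x /\ f x = y.

Section GradedRingDefs.
Variables (G : eqType) (GL : group_law G) (R : comPzRingType) (GR : graded_ring GL R).

Definition homog (x : R) := exists g, rcomp GR g x = x.
Definition ideal (I : R -> Prop) :=
  [/\ I 0, (forall x y, I x -> I y -> I (x + y)) & (forall r x, I x -> I (r * x))].
Definition graded_ideal (I : R -> Prop) :=
  ideal I /\ (forall g x, I x -> I (rcomp GR g x)).
Definition proper {T} (I : T -> Prop) := exists x, ~ I x.
Definition Gr (I : R -> Prop) : R -> Prop :=
  fun x => forall g, exists n : nat, I (rcomp GR g x ^+ n.+1).
Definition graded_prime_ideal (p : R -> Prop) :=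
  [/\ graded_ideal p, proper p &
      forall a b, homog a -> homog b -> p (a * b) -> p a \/ p b].
Definition graded_qp_ideal (q : R -> Prop) :=
  [/\ graded_ideal q, proper q &
      forall a b, homog a -> homog b -> q (a * b) -> Gr q a \/ Gr q b].
Definition VZ (J : R -> Prop) : (R -> Prop) -> Prop :=
  fun p => graded_prime_ideal p /\ psubset J p.
End GradedRingDefs.

Section GradedModuleDefs.
Variables (G : eqType) (GL : group_law G) (R : comPzRingType) (GR : graded_ring GL R)
  (M : lmodType R) (GM : graded_module GR M).

Definition mhomog (m : M) := exists g, mcomp GM g m = m.
Definition submodule (N : M -> Prop) :=
  [/\ N 0, (forall x y, N x -> N y -> N (x + y)) & (forall r x, N x -> N (r *: x))].
Definition graded_submodule (N : M -> Prop) :=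
  submodule N /\ (forall g x, N x -> N (mcomp GM g x)).
Definition colon (K : M -> Prop) : R -> Prop := fun r => forall m, K (r *: m).
Definition Ann : R -> Prop := colon (fun m => m = 0).
Definition graded_prime_sub (P : M -> Prop) :=
  [/\ graded_submodule P, proper P &
      forall r m, homog GR r -> mhomog m -> P (r *: m) -> P m \/ colon P r].
Definition GrM (K : M -> Prop) : M -> Prop :=
  fun m => forall P, graded_prime_sub P -> psubset K P -> P m.
Definition primeful (K : M -> Prop) :=
  forall p, graded_prime_ideal GR p -> psubset (colon K) p ->
    exists P, [/\ graded_prime_sub P, psubset K P & forall r, colon P r <-> p r].
Definition graded_qp_sub (Q : M -> Prop) :=
  [/\ graded_submodule Q, proper Q &
      forall r m, homog GR r -> mhomog m -> Q (r *: m) ->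
        Gr GR (colon Q) r \/ GrM Q m].
Definition qpSpec (Q : M -> Prop) := graded_qp_sub Q /\ primeful Q.
Definition qpV (K : M -> Prop) : (M -> Prop) -> Prop :=
  fun Q => qpSpec Q /\ psubset (Gr GR (colon K)) (Gr GR (colon Q)).
Definition IM (I : R -> Prop) : M -> Prop :=
  fun m => exists n (r : 'I_n -> R) (x : 'I_n -> M),
    (forall i, I (r i)) /\ m = \sum_(i < n) r i *: x i.
End GradedModuleDefs.

(* ---------- the graded quotient ring R/Ann(M) ----------
   R-bar is modelled as a graded ring Rb together with a surjective graded
   ring morphism pi : R -> Rb whose kernel is exactly Ann(M). *)
Definition graded_quotient (G : eqType) (GL : group_law G) (R Rb : comPzRingType)
    (GR : graded_ring GL R) (GRb : graded_ring GL Rb) (pi : {rmorphism R -> Rb})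
    (A : R -> Prop) :=
  [/\ forall y, exists r, pi r = y,
      forall r, pi r = 0 <-> A r &
      forall g r, pi (rcomp GR g r) = rcomp GRb g (pi r)].

Section QuotientMaps.
Variables (G : eqType) (GL : group_law G) (R Rb : comPzRingType)
  (GR : graded_ring GL R) (GRb : graded_ring GL Rb) (pi : {rmorphism R -> Rb})
  (M : lmodType R) (GM : graded_module GR M).
Definition psiq (Q : M -> Prop) : Rb -> Prop := img pi (colon Q).
Definition phiR (qb : Rb -> Prop) : Rb -> Prop := img pi (Gr GR (fun r => qb (pi r))).
Definition varphi (Q : M -> Prop) : Rb -> Prop := img pi (Gr GR (colon Q)).
Definition qpV_Rb (J : Rb -> Prop) : (Rb -> Prop) -> Prop :=
  fun qb => graded_qp_ideal GRb qb /\ VZ GRb J (phiR qb).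
End QuotientMaps.
Arguments Ann {R} M.
Arguments IM {R} M I.
Arguments psiq {R Rb} pi {M} Q.
Arguments varphi {G GL R Rb} GR pi {M} Q.
Arguments phiR {G GL R Rb} GR pi qb.
Arguments qpV_Rb {G GL R Rb} GR GRb pi J qb.

(* For Q in qp.Spec_g(M), Gr((Q:M)) is a graded prime ideal containing Ann(M). Indeed,
   by primefulness every graded prime p over (Q:M) is (P:M) for a graded prime submodule
   P containing Q. If ab lies in Gr((Q:M)) with a, b homogeneous and a does not, then
   quasi-primariness puts b^n M into Gr_M(Q), hence b^n into every such p, and the graded
   Krull lemma (Gr(J) is the intersection of the graded primes over J, by Zorn's lemma)
   gives b in Gr((Q:M)). So phi^R(psi^q(Q)) = varphi(Q) is a point of Spec_g(R/Ann M),
   psi^q(Q) is quasi-primary, and each of the three preimages of V(I/Ann M) is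
   {Q | I <= Gr((Q:M))}. That set is qp-V(IM), because a graded prime submodule P
   contains IM exactly when I <= (P:M). *)
From mathcomp Require Import all_boot all_order all_algebra.
From mathcomp Require Import ring.
From mathcomp Require boolp classical_sets.
From Stdlib Require Import Classical.
Set Implicit Arguments. Unset Strict Implicit. Unset Printing Implicit Defensive.
Import GRing.Theory.
Local Open Scope ring_scope.

Lemma sum_if_eq (V : nmodType) (I : eqType) (s : seq I) (i : I) (F : I -> V) :
  uniq s -> (i \notin s -> F i = 0) ->
  \sum_(k <- s) (if k == i then F k else 0) = F i.
Proof.
move=> s_uniq F0; have [si | si] := boolP (i \in s).
  by rewrite (bigD1_seq i) //= eqxx big1 ?addr0 // => k /negbTE ->.
rewrite F0 // big_seq big1 // => k sk.
by case: eqP => // ki; rewrite -ki sk in si.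
Qed.

Section GroupLaw.
Variables (G : eqType) (GL : group_law G).
Local Notation gm := (gmul GL).
Local Notation g1 := (gone GL).
Local Notation gV := (ginv GL).

Lemma gmulgI x y z : gm x y = gm x z -> y = z.
Proof.
by move=> E; rewrite -(gmul1g GL y) -(gmulVg GL x) -gmulA E gmulA gmulVg gmul1g.
Qed.

Lemma gmulg1 x : gm x g1 = x.
Proof. by apply: (@gmulgI (gV x)); rewrite gmulA gmulVg gmul1g. Qed.

Lemma gmulgV x : gm x (gV x) = g1.
Proof. by apply: (@gmulgI (gV x)); rewrite gmulA gmulVg gmul1g gmulg1. Qed.

Lemma gmulIg x y z : gm y x = gm z x -> y = z.
Proof. by move=> E; rewrite -(gmulg1 y) -(gmulg1 z) -(gmulgV x) !gmulA E. Qed.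

Lemma eq_gmulgr x y : (x == gm x y) = (y == g1).
Proof.
apply/eqP/eqP => [E | ->]; last by rewrite gmulg1.
by apply: (@gmulgI x); rewrite gmulg1.
Qed.

Lemma eq_gmulIg x y z : (gm y x == gm z x) = (z == y).
Proof. by apply/eqP/eqP => [/gmulIg | ->]. Qed.
End GroupLaw.

Section GradedRing.
Variables (G : eqType) (GL : group_law G) (R : comPzRingType) (GR : graded_ring GL R).
Local Notation rc := (rcomp GR).
Local Notation gm := (gmul GL).

Lemma rcomp0 g : rc g 0 = 0.
Proof. by apply: (addIr (rc g 0)); rewrite -rcompD !add0r. Qed.

Lemma rcomp_sum g I (s : seq I) (P : pred I) (F : I -> R) :
  rc g (\sum_(i <- s | P i) F i) = \sum_(i <- s | P i) rc g (F i).
Proof. exact: (big_morph _ (rcompD GR g) (rcomp0 g)). Qed.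

Lemma rcomp_homogM k g h x y :
  rc k (rc g x * rc h y) = if k == gm g h then rc g x * rc h y else 0.
Proof. by rewrite -(rcompM GR g h x y) rcomp_id rcompM. Qed.

Lemma homog_rcomp g x : homog GR (rc g x).
Proof. by exists g; rewrite rcomp_id eqxx. Qed.

Lemma homogM a b : homog GR a -> homog GR b -> homog GR (a * b).
Proof. by move=> [g <-] [h <-]; exists (gm g h); rewrite rcompM. Qed.

Lemma homogX a n : homog GR a -> homog GR (a ^+ n.+1).
Proof.
move=> a_homog; elim: n => [|n IHn]; first by rewrite expr1.
by rewrite exprS; apply: homogM.
Qed.

Lemma rcomp_mul_homog g k r c : rc k c = c -> exists r', rc g (r * c) = r' * c.
Proof.
move=> ck; have [s [_ _ ->]] := rcomp_dec GR r.
exists (\sum_(h <- s | g == gm h k) rc h r).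
rewrite mulr_suml rcomp_sum [in RHS]big_mkcond mulr_suml; apply: eq_bigr => h _.
by rewrite -{1}ck rcomp_homogM ck; case: (g == gm h k); rewrite ?mul0r.
Qed.

Lemma mul_rcomp1 x : homog GR x -> x * rc (gone GL) 1 = x.
Proof.
move=> [h xh]; have [s [s_uniq s0 s1]] := rcomp_dec GR 1.
rewrite -(@sum_if_eq _ _ s _ (fun g => x * rc g 1) s_uniq);
  last by move/s0 ->; rewrite mulr0.
rewrite -[RHS]xh -[x in rc h x]mulr1 {2}s1 mulr_sumr rcomp_sum; apply: eq_bigr => g _.
by rewrite -{2}xh rcomp_homogM xh eq_gmulgr.
Qed.

Lemma rcomp1 : rc (gone GL) 1 = 1.
Proof.
have [s [_ _ s1]] := rcomp_dec GR 1.
rewrite -[LHS]mul1r {1}s1 mulr_suml.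
by rewrite [RHS]s1; apply: eq_bigr => g _; exact: mul_rcomp1 (homog_rcomp g 1).
Qed.

Lemma ideal_sum (X : R -> Prop) I (s : seq I) (P : pred I) (F : I -> R) :
  ideal X -> (forall i, P i -> X (F i)) -> X (\sum_(i <- s | P i) F i).
Proof. by move=> [X0 XD _]; apply: big_ind. Qed.

Lemma ideal_rcomp (X : R -> Prop) x : ideal X -> (forall g, X (rc g x)) -> X x.
Proof. by move=> X_ideal Xx; have [s [_ _ ->]] := rcomp_dec GR x; apply: ideal_sum. Qed.

Lemma graded_ideal_addM (A : R -> Prop) c : graded_ideal GR A -> homog GR c ->
  graded_ideal GR (fun x => exists p r, A p /\ x = p + r * c).
Proof.
move=> [[A0 AD AM] Ag] [k ck]; split; first split.
- by exists 0, 0; rewrite mul0r addr0.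
- move=> _ _ [p1 [r1 [Ap1 ->]]] [p2 [r2 [Ap2 ->]]].
  by exists (p1 + p2), (r1 + r2); rewrite mulrDl addrACA; split; first exact: AD.
- move=> r _ [p [r1 [Ap ->]]].
  by exists (r * p), (r * r1); rewrite mulrDr mulrA; split; first exact: AM.
- move=> g _ [p [r1 [Ap ->]]]; have [r' r'E] := rcomp_mul_homog g r1 ck.
  by exists (rc g p), r'; rewrite rcompD r'E; split; first exact: Ag.
Qed.

Section Krull.
Variables (J : R -> Prop) (y : R).

Definition avoiding (X : R -> Prop) :=
  [/\ graded_ideal GR X, psubset J X & forall n, ~ X (y ^+ n.+1)].

Lemma avoiding_chain_union (F : (R -> Prop) -> Prop) X0 x0 :
  (forall X x, F X -> X x -> avoiding X) ->
  (forall X Y, F X -> F Y -> psubset X Y \/ psubset Y X) -> F X0 -> X0 x0 ->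
  avoiding (fun x => exists2 X, F X & X x).
Proof.
move=> Fav Ftot FX0 X0x0; have [[[X00 _ _] _] JX0 _] := Fav _ _ FX0 X0x0.
split; first split; first split.
- by exists X0.
- move=> a b [X FX Xa] [Y FY Yb].
  have [[[_ XD _] _] _ _] := Fav _ _ FX Xa; have [[[_ YD _] _] _ _] := Fav _ _ FY Yb.
  have [XY | YX] := Ftot X Y FX FY; first by exists Y => //; apply: YD => //; apply: XY.
  by exists X => //; apply: XD => //; apply: YX.
- move=> r x [X FX Xx]; exists X => //.
  by have [[[_ _ XM] _] _ _] := Fav _ _ FX Xx; apply: XM.
- move=> g x [X FX Xx]; exists X => //.
  by have [[_ Xg] _ _] := Fav _ _ FX Xx; apply: Xg.
- by move=> x Jx; exists X0 => //; apply: JX0.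
- by move=> n [X FX Xy]; have [_ _ /(_ n)] := Fav _ _ FX Xy.
Qed.

Lemma exists_maximal_avoiding : avoiding J ->
  exists A, avoiding A /\ forall B, avoiding B -> psubset A B -> psubset B A.
Proof.
(* The empty set is admitted so that the empty chain has an upper bound. *)
move=> J_av; pose P X := (forall x, ~ X x) \/ avoiding X.
have [A [PA A_max]] : exists A, P A /\ forall B, classical_sets.proper A B -> ~ P B.
  apply: classical_sets.Zorn_bigcup => F FP Ftot.
  have [[X0 FX0 [x0 X0x0]] | F_empty] := classic (exists2 X, F X & exists x, X x).
    right; apply: (avoiding_chain_union (X0 := X0) (x0 := x0)) => // X x FX Xx.
    by case: (FP X FX) => // X_empty; case: (X_empty x).
  by left => x [X FX Xx]; apply: F_empty; exists X => //; exists x.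
case: PA => [A_empty | A_av].
  case: (A_max J); last by right.
  split=> [x /A_empty [] | JA]; have [[[J0 _ _] _] _ _] := J_av.
  exact: A_empty 0 (JA 0 J0).
exists A; split => // B B_av AB x Bx; apply: NNPP => nAx.
by apply: (A_max B); [split => // BA; apply: nAx; apply: BA | right].
Qed.

Lemma maximal_avoiding_prime A : avoiding A ->
  (forall B, avoiding B -> psubset A B -> psubset B A) -> graded_prime_ideal GR A.
Proof.
move=> A_av A_max; have [A_graded JA Ay] := A_av; have [[A0 AD AM] _] := A_graded.
have A_add c : homog GR c -> ~ A c -> exists n r p, A p /\ y ^+ n.+1 = p + r * c.
  move=> c_homog nAc; apply: NNPP => no_pow; apply: nAc.
  pose B x := exists p r, A p /\ x = p + r * c.
  have AB : psubset A B by move=> x Ax; exists x, 0; rewrite mul0r addr0.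
  have B_av : avoiding B.
    split; [exact: graded_ideal_addM | by move=> x /JA /AB |].
    by move=> n [p [r [Ap E]]]; apply: no_pow; exists n, r, p.
  by apply: (A_max B B_av AB); exists 0, 1; rewrite add0r mul1r.
split => //; first by exists y; rewrite -[y]expr1; apply: Ay.
move=> a b a_homog b_homog Aab; apply: NNPP => /not_or_and [nAa nAb].
have [n [r1 [p1 [Ap1 E1]]]] := A_add a a_homog nAa.
have [m [r2 [p2 [Ap2 E2]]]] := A_add b b_homog nAb.
apply: (Ay (n + m).+1); rewrite -addSn -addnS exprD E1 E2.
have -> : (p1 + r1 * a) * (p2 + r2 * b) =
    (p2 + r2 * b) * p1 + (r1 * a * p2 + r1 * r2 * (a * b)) by ring.
by apply: (AD); [apply: (AM) | apply: (AD); apply: (AM)].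
Qed.
End Krull.

Lemma graded_Krull (J : R -> Prop) y : graded_ideal GR J ->
  (forall n, ~ J (y ^+ n.+1)) ->
  exists p, [/\ graded_prime_ideal GR p, psubset J p & ~ p y].
Proof.
move=> J_graded Jy; have J_av : avoiding J y J by split.
have [A [A_av A_max]] := exists_maximal_avoiding J_av.
have [_ JA Ay] := A_av; exists A; split => //; first exact: maximal_avoiding_prime A_max.
by rewrite -[y]expr1; apply: Ay.
Qed.

Lemma prime_homogX (p : R -> Prop) a n :
  graded_prime_ideal GR p -> homog GR a -> p (a ^+ n.+1) -> p a.
Proof.
move=> [_ _ p_prime] a_homog; elim: n => [|n IHn]; first by rewrite expr1.
by rewrite exprS => /p_prime [] //; apply: homogX.
Qed.

Lemma Gr_sub_prime (J p : R -> Prop) :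
  graded_prime_ideal GR p -> psubset J p -> psubset (Gr GR J) p.
Proof.
move=> p_prime Jp x Jx; have [[p_ideal _] _ _] := p_prime.
apply: (ideal_rcomp p_ideal) => g; have [n Jxg] := Jx g.
exact: prime_homogX p_prime (homog_rcomp g x) (Jp _ Jxg).
Qed.

Lemma Gr_primes (J : R -> Prop) x : graded_ideal GR J ->
  (forall p, graded_prime_ideal GR p -> psubset J p -> p x) -> Gr GR J x.
Proof.
move=> J_graded px g; apply: NNPP => no_pow.
have [|p [p_prime Jp]] := @graded_Krull J (rc g x) J_graded.
  by move=> n Jn; apply: no_pow; exists n.
by apply; have [[_ pg] _ _] := p_prime; apply: pg; apply: px.
Qed.

Lemma sub_Gr (J : R -> Prop) : graded_ideal GR J -> psubset J (Gr GR J).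
Proof. by move=> [_ Jg] x Jx g; exists 0%N; rewrite expr1; apply: Jg. Qed.

Lemma Gr_graded (J : R -> Prop) : graded_ideal GR J -> graded_ideal GR (Gr GR J).
Proof.
move=> J_graded; split; first split.
- by apply: Gr_primes => // p [[[p0 _ _] _] _ _].
- move=> x y Jx Jy; apply: Gr_primes => // p p_prime Jp.
  by have [[[_ pD _] _] _ _] := p_prime; apply: pD; apply: (Gr_sub_prime p_prime Jp).
- move=> r x Jx; apply: Gr_primes => // p p_prime Jp.
  by have [[[_ _ pM] _] _ _] := p_prime; apply: pM; apply: (Gr_sub_prime p_prime Jp).
- move=> g x Jx; apply: Gr_primes => // p p_prime Jp.
  by have [[_ pg] _ _] := p_prime; apply: pg; apply: (Gr_sub_prime p_prime Jp).
Qed.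

Lemma Gr_homog_pow (J : R -> Prop) y : homog GR y -> Gr GR J y -> exists n, J (y ^+ n.+1).
Proof. by move=> [k <-] /(_ k); rewrite rcomp_id eqxx. Qed.

Lemma Gr_homogX (J : R -> Prop) a n :
  graded_ideal GR J -> homog GR a -> Gr GR J (a ^+ n.+1) -> Gr GR J a.
Proof.
move=> J_graded a_homog Jan; apply: Gr_primes => // p p_prime Jp.
exact: prime_homogX p_prime a_homog (Gr_sub_prime p_prime Jp Jan).
Qed.
End GradedRing.

Section GradedModule.
Variables (G : eqType) (GL : group_law G) (R : comPzRingType) (GR : graded_ring GL R)
  (M : lmodType R) (GM : graded_module GR M).
Local Notation rc := (rcomp GR).
Local Notation mc := (mcomp GM).
Local Notation gm := (gmul GL).

Lemma mcomp0 g : mc g 0 = 0.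
Proof. by apply: (addIr (mc g 0)); rewrite -mcompD !add0r. Qed.

Lemma mcomp_sum g I (s : seq I) (P : pred I) (F : I -> M) :
  mc g (\sum_(i <- s | P i) F i) = \sum_(i <- s | P i) mc g (F i).
Proof. exact: (big_morph _ (mcompD GM g) (mcomp0 g)). Qed.

Lemma mcomp_homogZ k g h r m :
  mc k (rc g r *: mc h m) = if k == gm g h then rc g r *: mc h m else 0.
Proof. by rewrite -(mcompZ GM g h r m) mcomp_id mcompZ. Qed.

Lemma mhomog_mcomp h m : mhomog GM (mc h m).
Proof. by exists h; rewrite mcomp_id eqxx. Qed.

Lemma mhomogZ r m : homog GR r -> mhomog GM m -> mhomog GM (r *: m).
Proof. by move=> [g <-] [h <-]; exists (gm g h); rewrite mcompZ. Qed.

Lemma submodule_sum (K : M -> Prop) I (s : seq I) (P : pred I) (F : I -> M) :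
  submodule K -> (forall i, P i -> K (F i)) -> K (\sum_(i <- s | P i) F i).
Proof. by move=> [K0 KD _]; apply: big_ind. Qed.

Lemma colon_homog (K : M -> Prop) r : submodule K ->
  (forall m, mhomog GM m -> K (r *: m)) -> colon K r.
Proof.
move=> K_sub Krm m; have [s [_ _ ->]] := mcomp_dec GM m.
by rewrite scaler_sumr; apply: submodule_sum => // h _; apply/Krm/mhomog_mcomp.
Qed.

Lemma colon_graded (K : M -> Prop) : graded_submodule GM K -> graded_ideal GR (colon K).
Proof.
move=> [[K0 KD KZ] Kg]; split; first split.
- by move=> m; rewrite scale0r.
- by move=> x y Kx Ky m; rewrite scalerDl; apply: KD.
- by move=> r x Kx m; rewrite -scalerA; apply: KZ.
move=> g r Kr; apply: colon_homog => // m [h mh].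
have [s [s_uniq s0 s1]] := rcomp_dec GR r.
suff <- : mc (gm g h) (r *: m) = rc g r *: m by apply: Kg.
rewrite -(@sum_if_eq _ _ s _ (fun k => rc k r *: m) s_uniq);
  last by move/s0 ->; rewrite scale0r.
rewrite {1}s1 scaler_suml mcomp_sum; apply: eq_bigr => k _.
by rewrite -{1}mh mcomp_homogZ mh eq_gmulIg.
Qed.

Lemma Ann_sub_colon (K : M -> Prop) : submodule K -> psubset (Ann M) (colon K).
Proof. by move=> [K0 _ _] a Ma m; rewrite Ma. Qed.

Lemma colonS (K L : M -> Prop) : psubset K L -> psubset (colon K) (colon L).
Proof. by move=> KL r Kr m; apply/KL/Kr. Qed.

Lemma sub_GrM (K : M -> Prop) : psubset K (GrM GM K).
Proof. by move=> m Km P _ KP; apply: KP. Qed.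

Lemma GrM_graded (K : M -> Prop) : graded_submodule GM (GrM GM K).
Proof.
split; first split.
- by move=> P [[[P0 _ _] _] _ _].
- move=> x y Kx Ky P P_prime KP; have [[[_ PD _] _] _ _] := P_prime.
  by apply: PD; [apply: Kx | apply: Ky].
- by move=> r x Kx P P_prime KP; have [[[_ _ PZ] _] _ _] := P_prime; apply: PZ; apply: Kx.
- by move=> g x Kx P P_prime KP; have [[_ Pg] _ _] := P_prime; apply: Pg; apply: Kx.
Qed.

Lemma colon_IM (I : R -> Prop) : psubset I (colon (IM M I)).
Proof. by move=> r Ir m; exists 1%N, (fun=> r), (fun=> m); rewrite big_ord1. Qed.

Lemma IM_sub (I : R -> Prop) (K : M -> Prop) :
  submodule K -> psubset I (colon K) -> psubset (IM M I) K.
Proof.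
by move=> K_sub IK _ [n [r [x [Ir ->]]]]; apply: submodule_sum => // i _; apply: IK.
Qed.

Section QuasiPrimary.
Variable Q : M -> Prop.
Hypothesis Q_qp : qpSpec GM Q.

Lemma colon_qp_graded : graded_ideal GR (colon Q).
Proof. by case: Q_qp => [[Q_graded _ _] _]; apply: colon_graded. Qed.

Lemma Gr_colon_qp_proper : ~ Gr GR (colon Q) 1.
Proof.
case: Q_qp => [[_ [m nQm] _] _] /(_ (gone GL)) [n].
by rewrite rcomp1 expr1n => /(_ m); rewrite scale1r.
Qed.

Lemma Gr_colon_qp_homog b : homog GR b ->
  (forall m, mhomog GM m -> GrM GM Q (b *: m)) -> Gr GR (colon Q) b.
Proof.
move=> b_homog bM; apply: Gr_primes colon_qp_graded _ => p p_prime Qp.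
have [_ primeful] := Q_qp; have [P [P_prime QP PQ]] := primeful p p_prime Qp.
have [[P_sub _] _ _] := P_prime.
by apply/PQ; apply: colon_homog => // m m_homog; apply: bM.
Qed.

Lemma Gr_colon_qp_prime : graded_prime_ideal GR (Gr GR (colon Q)).
Proof.
split; [exact: Gr_graded colon_qp_graded | by exists 1; apply: Gr_colon_qp_proper |].
move=> a b a_homog b_homog Qab.
have [n] := Gr_homog_pow (homogM a_homog b_homog) Qab; rewrite exprMn => Qabn.
have [Qa | nQa] := classic (Gr GR (colon Q) a); [by left | right].
apply: (Gr_homogX (n := n) colon_qp_graded b_homog).
apply: Gr_colon_qp_homog => [|m m_homog]; first exact: homogX.
have [[_ _ Q_quasi_primary] _] := Q_qp.
have Qabm : Q (a ^+ n.+1 *: (b ^+ n.+1 *: m)) by rewrite scalerA; apply: Qabn.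
have [Qa'|//] :=
  Q_quasi_primary _ _ (homogX n a_homog) (mhomogZ (homogX n b_homog) m_homog) Qabm.
by case: nQa; apply: Gr_homogX colon_qp_graded a_homog Qa'.
Qed.
End QuasiPrimary.

Lemma qpV_sandwich (I : R -> Prop) (K Q : M -> Prop) : graded_ideal GR I ->
  psubset I (colon K) -> psubset K (GrM GM (IM M I)) ->
  qpV GM K Q <-> qpSpec GM Q /\ psubset I (Gr GR (colon Q)).
Proof.
move=> [_ Ig] IK KI; split=> -[Q_qp QI]; split=> // x.
  by move=> Ix; apply: QI => g; exists 0%N; rewrite expr1; apply/IK/Ig.
move=> Kx; apply: Gr_primes (colon_qp_graded Q_qp) _ => p p_prime Qp.
have [_ primeful] := Q_qp; have [P [P_prime _ PQ]] := primeful p p_prime Qp.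
have [[P_sub _] _ _] := P_prime.
have IP : psubset I (colon P) by move=> r /QI /(Gr_sub_prime p_prime Qp) /PQ.
have KP : psubset K P by move=> m /KI; apply; last exact: IM_sub.
by apply: (Gr_sub_prime p_prime _ Kx) => r /(colonS KP) /PQ.
Qed.
End GradedModule.

Section Quotient.
Variables (G : eqType) (GL : group_law G) (R Rb : comPzRingType)
  (GR : graded_ring GL R) (GRb : graded_ring GL Rb) (pi : {rmorphism R -> Rb})
  (M : lmodType R) (GM : graded_module GR M).
Hypothesis pi_quotient : graded_quotient GR GRb pi (Ann M).
Local Notation rc := (rcomp GR).

Lemma pi_surj y : exists r, pi r = y.
Proof. by case: pi_quotient. Qed.

Lemma pi_rcomp g r : pi (rc g r) = rcomp GRb g (pi r).
Proof. by case: pi_quotient. Qed.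

Lemma img_piE (X : R -> Prop) : ideal X -> psubset (Ann M) X ->
  forall x, img pi X (pi x) <-> X x.
Proof.
move=> [_ XD _] AnnX x; split=> [[y [Xy pyx]] | Xx]; last by exists x.
have [_ ker_pi _] := pi_quotient.
have /AnnX Xxy : Ann M (x - y) by apply/ker_pi; rewrite rmorphB pyx subrr.
by rewrite -(subrK y x); apply: XD.
Qed.

Lemma img_graded (X : R -> Prop) : graded_ideal GR X -> psubset (Ann M) X ->
  graded_ideal GRb (img pi X).
Proof.
move=> [[X0 XD XM] Xg] AnnX; split; first split.
- by exists 0; rewrite rmorph0.
- move=> _ _ [x [Xx <-]] [y [Xy <-]].
  by exists (x + y); rewrite rmorphD; split; first exact: XD.
- move=> r' _ [x [Xx <-]]; have [r <-] := pi_surj r'.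
  by exists (r * x); rewrite rmorphM; split; first exact: XM.
- move=> g _ [x [Xx <-]].
  by exists (rc g x); rewrite pi_rcomp; split; first exact: Xg.
Qed.

Lemma homog_lift a' : homog GRb a' -> exists2 a, homog GR a & pi a = a'.
Proof.
move=> [g <-]; have [r <-] := pi_surj a'.
by exists (rc g r); [apply: homog_rcomp | rewrite pi_rcomp].
Qed.

Lemma img_prime (X : R -> Prop) : graded_prime_ideal GR X -> psubset (Ann M) X ->
  graded_prime_ideal GRb (img pi X).
Proof.
move=> [X_graded [x nXx] X_prime] AnnX; have [X_ideal _] := X_graded.
split; first exact: img_graded.
  by exists (pi x) => /(img_piE X_ideal AnnX).
move=> _ _ /homog_lift [a a_homog <-] /homog_lift [b b_homog <-].
rewrite -rmorphM => /(img_piE X_ideal AnnX) /(X_prime _ _ a_homog b_homog).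
by case=> [Xa | Xb]; [left; exists a | right; exists b].
Qed.

Lemma Gr_img (X : R -> Prop) : ideal X -> psubset (Ann M) X ->
  forall x, Gr GRb (img pi X) (pi x) <-> Gr GR X x.
Proof.
move=> X_ideal AnnX x; split=> Xx g; have [n Xxg] := Xx g; exists n.
  by move: Xxg; rewrite -pi_rcomp -rmorphXn => /(img_piE X_ideal AnnX).
by rewrite -pi_rcomp -rmorphXn; apply/(img_piE X_ideal AnnX).
Qed.

Lemma preim_graded (J : Rb -> Prop) : graded_ideal GRb J ->
  graded_ideal GR (fun r => J (pi r)).
Proof.
move=> [[J0 JD JM] Jg]; split; first split.
- by rewrite rmorph0.
- by move=> x y Jx Jy; rewrite rmorphD; apply: JD.
- by move=> r x Jx; rewrite rmorphM; apply: JM.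
- by move=> g x Jx; rewrite pi_rcomp; apply: Jg.
Qed.

Section QuasiPrimaryImage.
Variable Q : M -> Prop.
Hypothesis Q_qp : qpSpec GM Q.

Let colon_ideal : ideal (colon Q).
Proof. by case: (colon_qp_graded Q_qp). Qed.

Let Ann_colon : psubset (Ann M) (colon Q).
Proof. by case: Q_qp => [[[Q_sub _] _ _] _]; apply: Ann_sub_colon. Qed.

Let Gr_ideal : ideal (Gr GR (colon Q)).
Proof. by case: (Gr_graded (colon_qp_graded Q_qp)). Qed.

Let Ann_Gr : psubset (Ann M) (Gr GR (colon Q)).
Proof. by move=> a /Ann_colon; exact: (sub_Gr (colon_qp_graded Q_qp)). Qed.

Lemma phiR_psiq : phiR GR pi (psiq pi Q) = varphi GR pi Q.
Proof.
rewrite /phiR /varphi; congr (img pi (Gr GR _)).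
apply: boolp.funext => r; apply: boolp.propext.
exact: img_piE.
Qed.

Lemma psiq_qp : graded_qp_ideal GRb (psiq pi Q).
Proof.
split; first exact: img_graded (colon_qp_graded Q_qp) Ann_colon.
  exists (pi 1) => /(img_piE colon_ideal Ann_colon) Q1.
  by apply: (Gr_colon_qp_proper Q_qp); apply: sub_Gr (colon_qp_graded Q_qp) _ Q1.
move=> _ _ /homog_lift [a a_homog <-] /homog_lift [b b_homog <-].
rewrite -rmorphM => /(img_piE colon_ideal Ann_colon) Qab.
have [_ _ Gr_prime] := Gr_colon_qp_prime Q_qp.
have /Gr_prime := sub_Gr (colon_qp_graded Q_qp) Qab.
by case=> // [Qa | Qb]; [left | right]; apply/(Gr_img colon_ideal Ann_colon).
Qed.

Lemma qpV_Rb_psiq (J : Rb -> Prop) :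
  qpV_Rb GR GRb pi J (psiq pi Q) <-> VZ GRb J (varphi GR pi Q).
Proof. by rewrite /qpV_Rb phiR_psiq; split=> [[] | ] //; split=> //; apply: psiq_qp. Qed.

Lemma VZ_varphi (J : Rb -> Prop) (I : R -> Prop) : (forall r, J (pi r) <-> I r) ->
  VZ GRb J (varphi GR pi Q) <-> psubset I (Gr GR (colon Q)).
Proof.
move=> JI; split=> [[_ JQ] r /JI /JQ | IQ].
  by move/(img_piE Gr_ideal Ann_Gr).
split; first exact: img_prime (Gr_colon_qp_prime Q_qp) Ann_Gr.
move=> y Jy; have [r ry] := pi_surj y; exists r; split => //.
by apply: IQ; apply/JI; rewrite ry.
Qed.
End QuasiPrimaryImage.

Lemma qpSpec_VZ_varphi (J : Rb -> Prop) (I : R -> Prop) (Q : M -> Prop) :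
  (forall r, J (pi r) <-> I r) ->
  qpSpec GM Q /\ VZ GRb J (varphi GR pi Q) <->
  qpSpec GM Q /\ psubset I (Gr GR (colon Q)).
Proof. by move=> JI; split=> -[Q_qp]; rewrite (VZ_varphi Q_qp JI). Qed.
End Quotient.

Theorem theorem3p11 (G : eqType) (GL : group_law G) (R : comPzRingType)
  (GR : graded_ring GL R) (M : lmodType R) (GM : graded_module GR M)
  (Rb : comPzRingType) (GRb : graded_ring GL Rb) (pi : {rmorphism R -> Rb}) :
  graded_quotient GR GRb pi (Ann M) ->
  (* the displayed chain of equalities, as subsets of qp.Spec_g(M) *)
  (forall I : R -> Prop, graded_ideal GR I -> psubset (Ann M) I ->
   forall Q : M -> Prop,
     ((qpSpec GM Q /\ VZ GRb (img pi I) (varphi GR pi Q)) <->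
      (qpSpec GM Q /\ VZ GRb (img pi I) (phiR GR pi (psiq pi Q))))
  /\ ((qpSpec GM Q /\ VZ GRb (img pi I) (phiR GR pi (psiq pi Q))) <->
      (qpSpec GM Q /\ qpV_Rb GR GRb pi (img pi I) (psiq pi Q)))
  /\ ((qpSpec GM Q /\ qpV_Rb GR GRb pi (img pi I) (psiq pi Q)) <->
      qpV GM (IM M I) Q))
  /\
  (* continuity: preimages of Zariski-closed sets are quasi-Zariski closed *)
  (forall J : Rb -> Prop, graded_ideal GRb J ->
   exists K : M -> Prop, graded_submodule GM K /\
     forall Q : M -> Prop,
       (qpSpec GM Q /\ VZ GRb J (varphi GR pi Q)) <-> qpV GM K Q).
Proof.
move=> pi_quotient; split.
- move=> I I_graded AnnI Q.
  have imgIE := img_piE pi_quotient (proj1 I_graded) AnnI.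
  split; [|split].
  + by split=> -[Q_qp]; rewrite (phiR_psiq pi_quotient Q_qp).
  + by split=> -[Q_qp]; rewrite (qpV_Rb_psiq pi_quotient Q_qp) (phiR_psiq pi_quotient Q_qp).
  + rewrite (qpV_sandwich Q I_graded (@colon_IM _ M I)); last exact: sub_GrM.
    rewrite -(qpSpec_VZ_varphi GM pi_quotient Q imgIE).
    by split=> -[Q_qp]; rewrite (qpV_Rb_psiq pi_quotient Q_qp).
- move=> J J_graded; pose I r := J (pi r).
  exists (GrM GM (IM M I)); split=> [|Q]; first exact: GrM_graded.
  rewrite (qpV_sandwich Q (preim_graded pi_quotient J_graded)) //.
    exact: qpSpec_VZ_varphi.
  by move=> r Ir m; apply: sub_GrM; apply: (@colon_IM _ M I r Ir m).
Qed.
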